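(* Suppose Assumptions 1, 2 and 3 hold and problem (P) is feasible. Let $\lambda^*$ be a maximizer over $\mathbb{R}$ of the modified dual function $g^m$, so that $(\hat{x}_1(\lambda^* ),\dots,\hat{x}_N(\lambda^* ))$ is an optimal solution of (P). Consider the distributed dynamics $$\dot{\lambda}_i=d_i-\hat{x}_i(\lambda_i)+\phi_i\big(\hat{x}_i(\lambda_i)\big)+k\sum_{j\in\mathcal{N}_i}(\lambda_j-\lambda_i),\qquad i=1,\dots,N,$$ with gain $k>0$. Then for every $\epsilon>0$ there exist $\bar{k}>0$ and a function $T(\boldsymbol{\lambda}(0),k)$ such that for all $k>\bar{k}$ and every initial condition $\boldsymbol{\lambda}(0)=(\lambda_1(0),\dots,\lambda_N(0))\in\mathbb{R}^N$, $$|\hat{x}_i(\lambda_i(t))-\hat{x}_i(\lambda^* )|\le\epsilon\quad\text{for all } i\in\{1,\dots,N\}\text{ and all } t\ge T(\boldsymbol{\lambda}(0),k).$$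
   Context: For $i=1,\dots,N$: $d_i\in\mathbb{R}$, $\mathcal{X}_i=[\underline{x}_i,\bar{x}_i]$ a nonempty closed interval, $f_i,\phi_i:\mathbb{R}\to\mathbb{R}$. Problem (P): minimize $\sum_{i=1}^N f_i(x_i)$ subject to $\sum_{i=1}^N d_i=\sum_{i=1}^N(x_i-\phi_i(x_i))$ and $x_i\in\mathcal{X}_i$ for all $i$; feasibility is equivalent to $\sum_i(\underline{x}_i-\phi_i(\underline{x}_i))\le\sum_i d_i\le\sum_i(\bar{x}_i-\phi_i(\bar{x}_i))$. Assumption 1: for each $i$, $f_i$ and $\phi_i$ are continuously differentiable, $f_i$ is strictly convex on $\mathcal{X}_i$, $\phi_i$ is convex on $\mathcal{X}_i$, and $\phi_i'(x_i)<1$ for all $x_i\in\mathcal{X}_i$. Assumption 2: $f_i'(x_i)>0$ for all $x_i\in\mathcal{X}_i$ and all $i$. Assumption 3: the communication graph $\mathcal{G}=(\{1,\dots,N\},\mathcal{E})$ is undirected and connected; $\mathcal{N}_i=\{j:(j,i)\in\mathcal{E}\}$. Local Lagrangian: $\mathcal{L}^r_i(x_i,\lambda)=f_i(x_i)+\lambda(d_i-x_i+\phi_i(x_i))$. Let $v_i(x_i)=f_i'(x_i)(1-\phi_i'(x_i))^{-1}$ on $\mathcal{X}_i$ (strictly increasing). Define for $\lambda\in\mathbb{R}$: $\hat{x}_i(\lambda)=\underline{x}_i$ if $\lambda\le v_i(\underline{x}_i)$; $\hat{x}_i(\lambda)=v_i^{-1}(\lambda)$ if $v_i(\underline{x}_i)<\lambda<v_i(\bar{x}_i)$;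 $\hat{x}_i(\lambda)=\bar{x}_i$ if $\lambda\ge v_i(\bar{x}_i)$. Modified dual function: $g^m(\lambda)=\sum_{i=1}^N\mathcal{L}^r_i(\hat{x}_i(\lambda),\lambda)$. *)

From Stdlib Require Import Reals Lra ClassicalEpsilon.
Open Scope R_scope.

(* sumN n F = F 0 + ... + F (n-1)  (indices 0..n-1 play the role of 1..N) *)
Fixpoint sumN (n : nat) (F : nat -> R) : R :=
  match n with
  | O => 0
  | S m => sumN m F + F m
  end.

Definition strictly_convex_on (g : R -> R) (a b : R) : Prop :=
  forall x y t, a <= x <= b -> a <= y <= b -> x <> y -> 0 < t < 1 ->
    g (t * x + (1 - t) * y) < t * g x + (1 - t) * g y.

Definition convex_on (g : R -> R) (a b : R) : Prop :=
  forall x y t, a <= x <= b -> a <= y <= b -> 0 <= t <= 1 ->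
    g (t * x + (1 - t) * y) <= t * g x + (1 - t) * g y.

Definition vfun (df dphi : R -> R) (x : R) : R := df x / (1 - dphi x).

(* v^{-1}(lam): the point x in (xl, xu) with v x = lam (unique when v is
   continuous, strictly increasing and v xl < lam < v xu). *)
Definition vinv (v : R -> R) (xl xu lam : R) : R :=
  epsilon (inhabits 0) (fun x => xl < x < xu /\ v x = lam).

Definition xhat (df dphi : R -> R) (xl xu lam : R) : R :=
  let v := vfun df dphi in
  if Rle_dec lam (v xl) then xl
  else if Rle_dec (v xu) lam then xu
  else vinv v xl xu lam.

Definition Lr (f phi : R -> R) (d x lam : R) : R :=
  f x + lam * (d - x + phi x).

Definition gm (N : nat) (d xl xu : nat -> R) (f phi df dphi : nat -> R -> R)
  (lam : R) : R :=
  sumN N (fun i => Lr (f i) (phi i) (d i)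
                     (xhat (df i) (dphi i) (xl i) (xu i) lam) lam).

Inductive reach (N : nat) (a : nat -> nat -> bool) : nat -> nat -> Prop :=
| reach_refl : forall i, (i < N)%nat -> reach N a i i
| reach_step : forall i j l, (i < N)%nat -> (j < N)%nat -> a i j = true ->
    reach N a j l -> reach N a i l.

Definition connected (N : nat) (a : nat -> nat -> bool) : Prop :=
  forall i j, (i < N)%nat -> (j < N)%nat -> reach N a i j.

(* right-hand side of the distributed dynamics for agent i;
   neighbours N_i = { j < N | a j i = true } *)
Definition dyn_rhs (N : nat) (a : nat -> nat -> bool) (d xl xu : nat -> R)
  (phi df dphi : nat -> R -> R) (k : R) (lv : nat -> R) (i : nat) : R :=
  let xh := xhat (df i) (dphi i) (xl i) (xu i) (lv i) in
  d i - xh + phi i xh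
  + k * sumN N (fun j => if a j i then lv j - lv i else 0).

Definition is_solution (N : nat) (a : nat -> nat -> bool) (d xl xu : nat -> R)
  (phi df dphi : nat -> R -> R) (k : R) (lam : R -> nat -> R) : Prop :=
  (forall i t, (i < N)%nat -> 0 < t ->
     derivable_pt_lim (fun s => lam s i) t
       (dyn_rhs N a d xl xu phi df dphi k (lam t) i)) /\
  (forall i, (i < N)%nat -> forall e, 0 < e -> exists delta, 0 < delta /\
     forall t, 0 <= t < delta -> Rabs (lam t i - lam 0 i) < e).

(** Each agent [i] minimises its Lagrangian [L_i(x, lam) = f_i x + lam (d_i -
    x + phi_i x)] over its box; the minimiser is [xhat_i lam], and the local
    dual function [g_i lam = L_i(xhat_i lam, lam)] is concave with derivative
    the residual [u_i lam = d_i - xhat_i lam + phi_i(xhat_i lam)] (envelope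
    theorem).  The dynamics is the gradient flow of the penalised dual
    [W_k(l) = sum_i g_i(l_i) - k/4 Q(l)], [Q] the graph disagreement, so the
    classical Lyapunov function [|l - lstar|^2/2 + t (sum_i g_i lstar - W_k(l))]
    is nonincreasing and the dual gap decays like [1/t].  The dual gap splits
    into nonnegative primal excesses, a term with weights [u_i lstar] (which
    sum to zero since [lstar] maximises the dual), and the penalty; on a
    connected graph the middle term is absorbed by the penalty up to [O(1/k)].
    Finally strict convexity of [f_i] turns a small primal excess into a
    small allocation error. *)

From Stdlib Require Import Reals Lra Lia ClassicalEpsilon Ranalysis5.
Open Scope R_scope.
Set Implicit Arguments.

(** * Finite sums over [0..n-1] *)

Lemma sumN_ext n F G : (forall i, (i < n)%nat -> F i = G i) -> sumN n F = sumN n G.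
Proof.
  induction n as [|n IH]; intros HFG; simpl; auto.
  rewrite IH by (intros; apply HFG; lia). rewrite HFG by lia. reflexivity.
Qed.

Lemma sumN_plus n F G : sumN n (fun i => F i + G i) = sumN n F + sumN n G.
Proof. induction n as [|n IH]; simpl; [lra|]. rewrite IH. lra. Qed.

Lemma sumN_scal n c F : sumN n (fun i => c * F i) = c * sumN n F.
Proof. induction n as [|n IH]; simpl; [lra|]. rewrite IH. lra. Qed.

Lemma sumN_opp n F : sumN n (fun i => - F i) = - sumN n F.
Proof. induction n as [|n IH]; simpl; [lra|]. rewrite IH. lra. Qed.

Lemma sumN_minus n F G : sumN n (fun i => F i - G i) = sumN n F - sumN n G.
Proof. induction n as [|n IH]; simpl; [lra|]. rewrite IH. lra. Qed.

Lemma sumN_const n c : sumN n (fun _ => c) = INR n * c.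
Proof. induction n as [|n IH]; simpl sumN; [simpl; lra|]. rewrite IH, S_INR. lra. Qed.

Lemma sumN_le n F G : (forall i, (i < n)%nat -> F i <= G i) -> sumN n F <= sumN n G.
Proof.
  induction n as [|n IH]; intros HFG; simpl; [lra|].
  assert (sumN n F <= sumN n G) by (apply IH; intros; apply HFG; lia).
  assert (F n <= G n) by (apply HFG; lia). lra.
Qed.

Lemma sumN_nonneg n F : (forall i, (i < n)%nat -> 0 <= F i) -> 0 <= sumN n F.
Proof.
  intros HF. replace 0 with (sumN n (fun _ => 0)) by (rewrite sumN_const; ring).
  apply sumN_le; auto.
Qed.

Lemma sumN_term n F j : (forall i, (i < n)%nat -> 0 <= F i) -> (j < n)%nat -> F j <= sumN n F.
Proof.
  induction n as [|n IH]; intros HF Hj; simpl; [lia|].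
  assert (0 <= sumN n F) by (apply sumN_nonneg; intros; apply HF; lia).
  destruct (Nat.eq_dec j n) as [->|Hne]; [lra|].
  assert (F j <= sumN n F) by (apply IH; [intros; apply HF|]; lia).
  assert (0 <= F n) by (apply HF; lia). lra.
Qed.

Lemma sumN_swap n m F :
  sumN n (fun p => sumN m (fun q => F p q)) = sumN m (fun q => sumN n (fun p => F p q)).
Proof.
  induction n as [|n IH]; simpl.
  - rewrite sumN_const. ring.
  - rewrite IH, <- sumN_plus. reflexivity.
Qed.

Lemma derivable_pt_lim_sumN n F F' x :
  (forall i, (i < n)%nat -> derivable_pt_lim (F i) x (F' i)) ->
  derivable_pt_lim (fun y => sumN n (fun i => F i y)) x (sumN n F').
Proof.
  induction n as [|n IH]; intros HF; simpl.
  - apply derivable_pt_lim_const.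
  - apply (derivable_pt_lim_plus (fun y => sumN n (fun i => F i y)) (F n)).
    + apply IH; intros; apply HF; lia.
    + apply HF; lia.
Qed.

Lemma finite_uniform_nat (P : nat -> nat -> Prop) n :
  (forall i m m', (m <= m')%nat -> P i m -> P i m') ->
  (forall i, (i < n)%nat -> exists m, P i m) -> exists M, forall i, (i < n)%nat -> P i M.
Proof.
  intros Hmono. induction n as [|n IH]; intros Hex.
  - exists 0%nat. intros; lia.
  - destruct IH as [M HM]; [intros; apply Hex; lia|].
    destruct (Hex n ltac:(lia)) as [m Hm]. exists (M + m)%nat. intros i Hi.
    destruct (Nat.eq_dec i n) as [->|Hne].
    + apply (Hmono n m); [lia|auto].
    + apply (Hmono i M); [lia|]. apply HM; lia.
Qed.

Lemma finite_uniform_pos (P : nat -> R -> Prop) n :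
  (forall i c c', 0 < c' <= c -> P i c -> P i c') ->
  (forall i, (i < n)%nat -> exists c, 0 < c /\ P i c) ->
  exists c, 0 < c /\ forall i, (i < n)%nat -> P i c.
Proof.
  intros Hmono. induction n as [|n IH]; intros Hex.
  - exists 1. split; [lra|]. intros; lia.
  - destruct IH as [c [Hc HP]]; [intros; apply Hex; lia|].
    destruct (Hex n ltac:(lia)) as [c' [Hc' HP']].
    pose proof (Rmin_l c c'). pose proof (Rmin_r c c'). pose proof (Rmin_pos c c' Hc Hc').
    exists (Rmin c c'). split; auto. intros i Hi.
    destruct (Nat.eq_dec i n) as [->|Hne].
    + apply (Hmono n c'); auto.
    + apply (Hmono i c); auto. apply HP; lia.
Qed.

(** * One-variable calculus *)

Lemma increasing_of_deriv_pos g g' a b : a < b ->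
  (forall c, a <= c <= b -> derivable_pt_lim g c (g' c)) ->
  (forall c, a < c < b -> 0 < g' c) -> g a < g b.
Proof.
  intros Hab Hd Hpos. destruct (MVT_cor2 g g' a b Hab Hd) as [c [Hmvt Hc]].
  specialize (Hpos c Hc). nra.
Qed.

Lemma decreasing_of_deriv_neg g g' a b : a < b ->
  (forall c, a <= c <= b -> derivable_pt_lim g c (g' c)) ->
  (forall c, a < c < b -> g' c < 0) -> g b < g a.
Proof.
  intros Hab Hd Hneg. destruct (MVT_cor2 g g' a b Hab Hd) as [c [Hmvt Hc]].
  specialize (Hneg c Hc). nra.
Qed.

Lemma deriv_le_right_slopes g x l H S : derivable_pt_lim g x l -> 0 < H ->
  (forall h, 0 < h < H -> (g (x + h) - g x) / h <= S) -> l <= S.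
Proof.
  intros Hd HH Hs. destruct (Rle_dec l S) as [|Hlt]; auto. exfalso.
  destruct (Hd (l - S) ltac:(lra)) as [[dl Hdl] Hq]. simpl in Hq.
  set (h := Rmin (dl / 2) (H / 2)).
  assert (0 < h) by (apply Rmin_pos; lra).
  assert (h <= dl / 2) by apply Rmin_l. assert (h <= H / 2) by apply Rmin_r.
  specialize (Hq h ltac:(lra) ltac:(rewrite Rabs_pos_eq; lra)).
  specialize (Hs h ltac:(lra)). apply Rabs_def2 in Hq. lra.
Qed.

Lemma deriv_ge_left_slopes g y l H S : derivable_pt_lim g y l -> 0 < H ->
  (forall h, 0 < h < H -> S <= (g y - g (y - h)) / h) -> S <= l.
Proof.
  intros Hd HH Hs. destruct (Rle_dec S l) as [|Hlt]; auto. exfalso.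
  destruct (Hd (S - l) ltac:(lra)) as [[dl Hdl] Hq]. simpl in Hq.
  set (h := Rmin (dl / 2) (H / 2)).
  assert (0 < h) by (apply Rmin_pos; lra).
  assert (h <= dl / 2) by apply Rmin_l. assert (h <= H / 2) by apply Rmin_r.
  specialize (Hq (- h) ltac:(lra) ltac:(rewrite Rabs_Ropp, Rabs_pos_eq; lra)).
  specialize (Hs h ltac:(lra)).
  replace ((g (y + - h) - g y) / - h) with ((g y - g (y - h)) / h) in Hq
    by (replace (y + - h) with (y - h) by ring; field; lra).
  apply Rabs_def2 in Hq. lra.
Qed.

Lemma Rdiv_le_cross p q r s : 0 < q -> 0 < s -> p * s <= r * q -> p / q <= r / s.
Proof.
  intros Hq Hs H. apply Rmult_le_reg_r with (q * s); [nra|].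
  replace (p / q * (q * s)) with (p * s) by (field; lra).
  replace (r / s * (q * s)) with (r * q) by (field; lra). lra.
Qed.

Lemma Rdiv_lt_cross p q r s : 0 < q -> 0 < s -> p * s < r * q -> p / q < r / s.
Proof.
  intros Hq Hs H. apply Rmult_lt_reg_r with (q * s); [nra|].
  replace (p / q * (q * s)) with (p * s) by (field; lra).
  replace (r / s * (q * s)) with (r * q) by (field; lra). lra.
Qed.

Lemma between_as_combination x z y : x < z < y ->
  let t := (y - z) / (y - x) in 0 < t < 1 /\ t * x + (1 - t) * y = z.
Proof.
  intros Hz t. unfold t. split; [split|field; lra].
  - apply Rdiv_lt_0_compat; lra.
  - apply Rmult_lt_reg_r with (y - x); [lra|].
    replace ((y - z) / (y - x) * (y - x)) with (y - z) by (field; lra). lra.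
Qed.

Lemma convex_chord g a b x z y : convex_on g a b -> a <= x -> x < z < y -> y <= b ->
  g z * (y - x) <= (y - z) * g x + (z - x) * g y.
Proof.
  intros Hc Hax Hz Hyb. destruct (between_as_combination Hz) as [Ht Hcomb].
  set (t := (y - z) / (y - x)) in *.
  pose proof (Hc x y t ltac:(lra) ltac:(lra) ltac:(lra)) as Hg. rewrite Hcomb in Hg.
  replace ((y - z) * g x + (z - x) * g y) with ((t * g x + (1 - t) * g y) * (y - x))
    by (unfold t; field; lra).
  apply Rmult_le_compat_r; lra.
Qed.

Lemma strict_convex_chord g a b x z y : strictly_convex_on g a b ->
  a <= x -> x < z < y -> y <= b ->
  g z * (y - x) < (y - z) * g x + (z - x) * g y.
Proof.
  intros Hc Hax Hz Hyb. destruct (between_as_combination Hz) as [Ht Hcomb].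
  set (t := (y - z) / (y - x)) in *.
  pose proof (Hc x y t ltac:(lra) ltac:(lra) ltac:(lra) Ht) as Hg. rewrite Hcomb in Hg.
  replace ((y - z) * g x + (z - x) * g y) with ((t * g x + (1 - t) * g y) * (y - x))
    by (unfold t; field; lra).
  apply Rmult_lt_compat_r; lra.
Qed.

Lemma strictly_convex_convex g a b : strictly_convex_on g a b -> convex_on g a b.
Proof.
  intros Hc x y t Hx Hy Ht.
  destruct (Req_dec x y) as [->|Hxy].
  { replace (t * y + (1 - t) * y) with y by ring. lra. }
  destruct (Req_dec t 0) as [->|Ht0].
  { replace (0 * x + (1 - 0) * y) with y by ring. lra. }
  destruct (Req_dec t 1) as [->|Ht1].
  { replace (1 * x + (1 - 1) * y) with x by ring. lra. }
  left. apply Hc; auto. lra.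
Qed.

Lemma convex_deriv_le_slope g g' a b x y : convex_on g a b ->
  derivable_pt_lim g x (g' x) -> a <= x -> x < y -> y <= b ->
  g' x <= (g y - g x) / (y - x).
Proof.
  intros Hc Hd Hax Hxy Hyb. apply (@deriv_le_right_slopes g x _ (y - x) _ Hd); [lra|].
  intros h Hh. replace h with ((x + h) - x) at 2 by ring. apply Rdiv_le_cross; try lra.
  pose proof (convex_chord (z := x + h) (y := y) Hc Hax ltac:(lra) Hyb). nra.
Qed.

Lemma convex_slope_le_deriv g g' a b x y : convex_on g a b ->
  derivable_pt_lim g y (g' y) -> a <= x -> x < y -> y <= b ->
  (g y - g x) / (y - x) <= g' y.
Proof.
  intros Hc Hd Hax Hxy Hyb. apply (@deriv_ge_left_slopes g y _ (y - x) _ Hd); [lra|].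
  intros h Hh. replace h with (y - (y - h)) at 2 by ring. apply Rdiv_le_cross; try lra.
  pose proof (convex_chord (z := y - h) (y := y) Hc Hax ltac:(lra) Hyb). nra.
Qed.

Lemma convex_deriv_mono g g' a b x y : convex_on g a b ->
  (forall z, derivable_pt_lim g z (g' z)) -> a <= x -> x < y -> y <= b -> g' x <= g' y.
Proof.
  intros Hc Hd Hax Hxy Hyb.
  pose proof (convex_deriv_le_slope g' Hc (Hd x) Hax Hxy Hyb).
  pose proof (convex_slope_le_deriv g' Hc (Hd y) Hax Hxy Hyb). lra.
Qed.

Lemma strictly_convex_deriv_mono g g' a b x y : strictly_convex_on g a b ->
  (forall z, derivable_pt_lim g z (g' z)) -> a <= x -> x < y -> y <= b -> g' x < g' y.
Proof.
  intros Hsc Hd Hax Hxy Hyb. pose proof (strictly_convex_convex Hsc) as Hc.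
  set (m := (x + y) / 2).
  pose proof (convex_deriv_le_slope (y := m) g' Hc (Hd x) Hax
    ltac:(unfold m; lra) ltac:(unfold m; lra)).
  pose proof (convex_slope_le_deriv g' Hc (Hd y) Hax Hxy Hyb).
  assert ((g m - g x) / (m - x) < (g y - g x) / (y - x)).
  { apply Rdiv_lt_cross; try (unfold m; lra).
    pose proof (strict_convex_chord (z := m) (y := y) Hsc Hax ltac:(unfold m; lra) Hyb). nra. }
  lra.
Qed.

(** The Jensen gap of [g] at the midpoint of [x] and [y]; for strictly
    convex [g] it is positive when [x <> y] and grows with [|y - x|]. *)
Definition midpoint_gap (g : R -> R) (x y : R) : R := g x / 2 + g y / 2 - g ((x + y) / 2).

Lemma midpoint_gap_deriv g g' x y : (forall z, derivable_pt_lim g z (g' z)) ->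
  derivable_pt_lim (midpoint_gap g x) y (g' y / 2 - g' ((x + y) / 2) / 2).
Proof.
  intros Hd. unfold midpoint_gap.
  replace (g' y / 2 - g' ((x + y) / 2) / 2)
    with (0 + g' y / 2 - g' ((x + y) / 2) * ((0 + 1) / 2)) by field.
  apply (derivable_pt_lim_minus (fun z => g x / 2 + g z / 2) (fun z => g ((x + z) / 2))).
  - apply (derivable_pt_lim_plus (fun _ => g x / 2) (fun z => g z / 2)).
    + apply derivable_pt_lim_const.
    + apply derivable_pt_lim_div_scal, Hd.
  - apply (derivable_pt_lim_comp (fun z => (x + z) / 2) g); [|apply Hd].
    apply derivable_pt_lim_div_scal.
    apply (derivable_pt_lim_plus (fun _ => x) (fun z => z));
      [apply derivable_pt_lim_const|apply derivable_pt_lim_id].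
Qed.

Lemma midpoint_gap_monotone g g' a b x : strictly_convex_on g a b ->
  (forall z, derivable_pt_lim g z (g' z)) -> a <= x <= b ->
  (forall y z, x <= y -> y < z -> z <= b -> midpoint_gap g x y < midpoint_gap g x z) /\
  (forall y z, a <= y -> y < z -> z <= x -> midpoint_gap g x z < midpoint_gap g x y).
Proof.
  intros Hsc Hd Hx.
  set (G' := fun y => g' y / 2 - g' ((x + y) / 2) / 2).
  assert (HG : forall y, derivable_pt_lim (midpoint_gap g x) y (G' y))
    by (intros; apply midpoint_gap_deriv, Hd).
  split; intros y z Hy Hyz Hz.
  - apply (increasing_of_deriv_pos G' Hyz (fun c _ => HG c)).
    intros c Hc. unfold G'.
    pose proof (strictly_convex_deriv_mono (x := (x + c) / 2) (y := c) g' Hsc Hd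
      ltac:(lra) ltac:(lra) ltac:(lra)). lra.
  - apply (decreasing_of_deriv_neg G' Hyz (fun c _ => HG c)).
    intros c Hc. unfold G'.
    pose proof (strictly_convex_deriv_mono (x := c) (y := (x + c) / 2) g' Hsc Hd
      ltac:(lra) ltac:(lra) ltac:(lra)). lra.
Qed.

Lemma midpoint_gap_lower_bound g g' a b x e : strictly_convex_on g a b ->
  (forall z, derivable_pt_lim g z (g' z)) -> a <= x <= b -> 0 < e ->
  exists c, 0 < c /\ forall y, a <= y <= b -> e < Rabs (y - x) -> c <= midpoint_gap g x y.
Proof.
  intros Hsc Hd Hx He.
  destruct (midpoint_gap_monotone g' Hsc Hd Hx) as [Hright Hleft].
  assert (Hzero : midpoint_gap g x x = 0)
    by (unfold midpoint_gap; replace ((x + x) / 2) with x by field; field).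
  set (cr := if Rle_dec (x + e) b then midpoint_gap g x (x + e) else 1).
  set (cl := if Rle_dec a (x - e) then midpoint_gap g x (x - e) else 1).
  assert (Hcr : 0 < cr /\ forall y, y <= b -> x + e < y -> cr <= midpoint_gap g x y).
  { unfold cr. destruct (Rle_dec (x + e) b).
    - split; [rewrite <- Hzero; apply Hright; lra|].
      intros y Hy Hey. left. apply Hright; lra.
    - split; [lra|]. intros; lra. }
  assert (Hcl : 0 < cl /\ forall y, a <= y -> y < x - e -> cl <= midpoint_gap g x y).
  { unfold cl. destruct (Rle_dec a (x - e)).
    - split; [rewrite <- Hzero; apply Hleft; lra|].
      intros y Hy Hey. left. apply Hleft; lra.
    - split; [lra|]. intros; lra. }
  exists (Rmin cr cl). split; [apply Rmin_pos; tauto|].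
  intros y Hy Hye. pose proof (Rmin_l cr cl). pose proof (Rmin_r cr cl).
  destruct (Rle_dec 0 (y - x)).
  - rewrite Rabs_pos_eq in Hye by lra. pose proof (proj2 Hcr y ltac:(lra) ltac:(lra)). lra.
  - rewrite Rabs_left in Hye by lra. pose proof (proj2 Hcl y ltac:(lra) ltac:(lra)). lra.
Qed.

Lemma supergradient_derivative F u x :
  (forall y m, F m <= F y + u y * (m - y)) -> continuity_pt u x ->
  derivable_pt_lim F x (u x).
Proof.
  intros Hsup Hc e He. destruct (Hc e He) as [dl [Hdl Hq]].
  exists (mkposreal dl Hdl). intros h Hh Hhd. simpl in Hhd.
  assert (Hu : Rabs (u (x + h) - u x) < e).
  { apply (Hq (x + h)). split.
    - split; [exact I|]. intro E. apply Hh. lra.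
    - simpl. unfold R_dist. replace (x + h - x) with h by ring. exact Hhd. }
  pose proof (Hsup x (x + h)) as H1. pose proof (Hsup (x + h) x) as H2.
  replace (x + h - x) with h in H1 by ring. replace (x - (x + h)) with (- h) in H2 by ring.
  apply Rabs_def2 in Hu.
  set (Q := (F (x + h) - F x) / h).
  assert (HQh : F (x + h) = F x + Q * h) by (unfold Q; field; lra).
  rewrite HQh in H1, H2.
  destruct (Rlt_dec 0 h) as [Hpos|Hnpos].
  - assert (Q <= u x) by nra. assert (u (x + h) <= Q) by nra. apply Rabs_def1; lra.
  - assert (Hneg : h < 0) by lra.
    assert (u x <= Q) by nra. assert (Q <= u (x + h)) by nra. apply Rabs_def1; lra.
Qed.

Lemma deriv_zero_at_max F x l : derivable_pt_lim F x l -> (forall y, F y <= F x) -> l = 0.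
Proof.
  intros Hd Hmax. rewrite <- (derive_pt_eq_0 F x l (exist _ l Hd) Hd).
  apply (deriv_maximum F (x - 1) (x + 1)); intros; auto; lra.
Qed.

Definition right_lim (g : R -> R) (l : R) : Prop := limit1_in g (fun s => 0 <= s) l 0.

Lemma right_lim_const c : right_lim (fun _ => c) c.
Proof. exact (limit_free (fun _ => c) _ 0 0). Qed.

Lemma right_lim_comp g l h : right_lim g l -> continuity_pt h l ->
  right_lim (fun s => h (g s)) (h l).
Proof.
  intros Hg Hc e He. destruct (Hc e He) as [d1 [Hd1 Hc']].
  destruct (Hg d1 Hd1) as [d [Hd Hg']]. exists d. split; auto.
  intros s Hs. specialize (Hg' s Hs). simpl in *.
  destruct (Req_dec (g s) l) as [E|E].
  - rewrite E. unfold R_dist. rewrite Rminus_diag, Rabs_R0. lra.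
  - apply (Hc' (g s)). split; [split; [exact I|intro; apply E; auto]|exact Hg'].
Qed.

Lemma right_lim_sumN n F L : (forall i, (i < n)%nat -> right_lim (F i) (L i)) ->
  right_lim (fun s => sumN n (fun i => F i s)) (sumN n L).
Proof.
  induction n as [|n IH]; intros HF; simpl.
  - apply right_lim_const.
  - apply (limit_plus (fun s => sumN n (fun i => F i s)) (F n)).
    + apply IH; intros; apply HF; lia.
    + apply HF; lia.
Qed.

Lemma le_right_lim_of_deriv_nonpos E E' L t : 0 < t ->
  (forall c, 0 < c -> derivable_pt_lim E c (E' c)) -> (forall c, 0 < c -> E' c <= 0) ->
  right_lim E L -> E t <= L.
Proof.
  intros Ht Hd Hneg HL.
  assert (Hmono : forall s, 0 < s < t -> E t <= E s).
  { intros s Hs. destruct (MVT_cor2 E E' s t ltac:(lra) (fun c Hc => Hd c ltac:(lra)))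
      as [c [Hmvt Hc]].
    specialize (Hneg c ltac:(lra)). nra. }
  destruct (Rle_dec (E t) L) as [|Hgt]; auto. exfalso.
  destruct (HL (E t - L) ltac:(lra)) as [dl [Hdl Hq]].
  set (s := Rmin (dl / 2) (t / 2)).
  assert (0 < s) by (apply Rmin_pos; lra).
  assert (s <= dl / 2) by apply Rmin_l. assert (s <= t / 2) by apply Rmin_r.
  specialize (Hq s). simpl in Hq. unfold R_dist in Hq.
  rewrite Rminus_0_r, Rabs_pos_eq in Hq by lra.
  specialize (Hq ltac:(split; lra)). specialize (Hmono s ltac:(lra)).
  apply Rabs_def2 in Hq. lra.
Qed.

(** * A single agent *)

(** Assumptions 1 and 2 of the paper for one agent with box [[xl, xu]]. *)
Record regular_agent (f phi df dphi : R -> R) (xl xu : R) : Prop := {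
  agent_box : xl <= xu;
  agent_df : forall x, derivable_pt_lim f x (df x);
  agent_df_cont : forall x, continuity_pt df x;
  agent_dphi : forall x, derivable_pt_lim phi x (dphi x);
  agent_dphi_cont : forall x, continuity_pt dphi x;
  agent_f_convex : strictly_convex_on f xl xu;
  agent_phi_convex : convex_on phi xl xu;
  agent_dphi_lt1 : forall x, xl <= x <= xu -> dphi x < 1;
  agent_df_pos : forall x, xl <= x <= xu -> 0 < df x }.

Section Agent.

Variables (f phi df dphi : R -> R) (xl xu d : R).
Hypothesis A : regular_agent f phi df dphi xl xu.

Local Notation v := (vfun df dphi).
Local Notation X := (xhat df dphi xl xu).

Lemma v_pos x : xl <= x <= xu -> 0 < v x.
Proof.
  intros Hx. unfold vfun.
  pose proof (agent_dphi_lt1 A Hx). pose proof (agent_df_pos A Hx).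
  apply Rdiv_lt_0_compat; lra.
Qed.

Lemma v_increasing x y : xl <= x -> x < y -> y <= xu -> v x < v y.
Proof.
  intros Hx Hxy Hy. unfold vfun.
  pose proof (strictly_convex_deriv_mono df (agent_f_convex A) (agent_df A) Hx Hxy Hy).
  pose proof (convex_deriv_mono dphi (agent_phi_convex A) (agent_dphi A) Hx Hxy Hy).
  pose proof (agent_dphi_lt1 A (x := x) ltac:(lra)).
  pose proof (agent_dphi_lt1 A (x := y) ltac:(lra)).
  pose proof (agent_df_pos A (x := x) ltac:(lra)).
  apply Rdiv_lt_cross; nra.
Qed.

Lemma v_cont x : xl <= x <= xu -> continuity_pt v x.
Proof.
  intros Hx. unfold vfun.
  apply (continuity_pt_div df (fun y => 1 - dphi y)).
  - apply (agent_df_cont A).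
  - apply (continuity_pt_minus (fct_cte 1) dphi); [apply continuity_pt_const; now intros|].
    apply (agent_dphi_cont A).
  - pose proof (agent_dphi_lt1 A Hx). lra.
Qed.

Lemma xhat_cases lam :
  (lam <= v xl /\ X lam = xl) \/ (v xu <= lam /\ X lam = xu) \/
  (xl < X lam < xu /\ v (X lam) = lam).
Proof.
  unfold xhat. cbv zeta.
  destruct (Rle_dec lam (v xl)) as [Hlo|Hlo]; [left; auto|].
  destruct (Rle_dec (v xu) lam) as [Hhi|Hhi]; [right; left; auto|].
  right; right. unfold vinv. apply epsilon_spec.
  assert (Hbox : xl < xu).
  { destruct (agent_box A) as [|Heq]; auto. subst. lra. }
  destruct (IVT_interv (fun x => v x - lam) xl xu) as [z [Hz Hvz]]; auto; try lra.
  - intros y Hy. apply (continuity_pt_minus v (fct_cte lam)).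
    + apply v_cont; auto.
    + apply continuity_pt_const. now intros.
  - exists z. split; [|lra]. split.
    + destruct (proj1 Hz) as [|Heq]; auto. subst. lra.
    + destruct (proj2 Hz) as [|Heq]; auto. subst. lra.
Qed.

Lemma xhat_in lam : xl <= X lam <= xu.
Proof.
  pose proof (agent_box A).
  destruct (xhat_cases lam) as [[_ ->]|[[_ ->]|[Hin _]]]; lra.
Qed.

Lemma xhat_le lam x : xl <= x <= xu -> lam <= v x -> X lam <= x.
Proof.
  intros Hx Hlam. destruct (xhat_cases lam) as [[_ ->]|[[Hhi ->]|[Hin Hv]]]; [lra| |].
  - destruct (Rle_dec xu x); auto.
    pose proof (v_increasing (x := x) (y := xu) ltac:(lra) ltac:(lra) ltac:(lra)). lra.
  - destruct (Rle_dec (X lam) x); auto.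
    pose proof (v_increasing (x := x) (y := X lam) ltac:(lra) ltac:(lra) ltac:(lra)). lra.
Qed.

Lemma xhat_ge lam x : xl <= x <= xu -> v x <= lam -> x <= X lam.
Proof.
  intros Hx Hlam. destruct (xhat_cases lam) as [[Hlo ->]|[[_ ->]|[Hin Hv]]]; [| lra|].
  - destruct (Rle_dec x xl); auto.
    pose proof (v_increasing (x := xl) (y := x) ltac:(lra) ltac:(lra) ltac:(lra)). lra.
  - destruct (Rle_dec x (X lam)); auto.
    pose proof (v_increasing (x := X lam) (y := x) ltac:(lra) ltac:(lra) ltac:(lra)). lra.
Qed.

Lemma xhat_cont lam0 : continuity_pt X lam0.
Proof.
  intros e He. set (x0 := X lam0). pose proof (xhat_in lam0) as Hx0. fold x0 in Hx0.
  (* [xhat] is nondecreasing, so it suffices to bound it from above to the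
     right of [lam0] and from below to its left *)
  assert (Hup : exists d1, 0 < d1 /\ forall lam, lam < lam0 + d1 -> X lam <= x0 + e / 2).
  { destruct (Rle_dec xu (x0 + e / 2)).
    - exists 1. split; [lra|]. intros lam _. pose proof (xhat_in lam). lra.
    - assert (lam0 < v (x0 + e / 2)).
      { destruct (Rlt_dec lam0 (v (x0 + e / 2))) as [|Hge]; auto.
        pose proof (xhat_ge (lam := lam0) (x := x0 + e / 2) ltac:(lra) ltac:(lra)) as Hq.
        fold x0 in Hq. lra. }
      exists (v (x0 + e / 2) - lam0). split; [lra|].
      intros lam Hlam. apply xhat_le; lra. }
  assert (Hlow : exists d2, 0 < d2 /\ forall lam, lam0 - d2 < lam -> x0 - e / 2 <= X lam).
  { destruct (Rle_dec (x0 - e / 2) xl).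
    - exists 1. split; [lra|]. intros lam _. pose proof (xhat_in lam). lra.
    - assert (v (x0 - e / 2) < lam0).
      { destruct (Rlt_dec (v (x0 - e / 2)) lam0) as [|Hle]; auto.
        pose proof (xhat_le (lam := lam0) (x := x0 - e / 2) ltac:(lra) ltac:(lra)) as Hq.
        fold x0 in Hq. lra. }
      exists (lam0 - v (x0 - e / 2)). split; [lra|].
      intros lam Hlam. apply xhat_ge; lra. }
  destruct Hup as [d1 [Hd1 Hup]]. destruct Hlow as [d2 [Hd2 Hlow]].
  exists (Rmin d1 d2). split; [apply Rmin_pos; auto|].
  intros lam [_ Hlam]. simpl in Hlam. unfold R_dist in *.
  pose proof (Rmin_l d1 d2). pose proof (Rmin_r d1 d2). apply Rabs_def2 in Hlam.
  specialize (Hup lam ltac:(lra)). specialize (Hlow lam ltac:(lra)).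
  apply Rabs_def1; fold x0; lra.
Qed.

Lemma Lr_deriv lam y : derivable_pt_lim (fun x => Lr f phi d x lam) y (df y + lam * (-1 + dphi y)).
Proof.
  unfold Lr. apply (derivable_pt_lim_plus f (fun x => lam * (d - x + phi x))).
  - apply (agent_df A).
  - replace (lam * (-1 + dphi y)) with (0 * (d - y + phi y) + lam * (0 - 1 + dphi y)) by ring.
    apply (derivable_pt_lim_mult (fun _ => lam) (fun x => d - x + phi x)).
    + apply derivable_pt_lim_const.
    + apply (derivable_pt_lim_plus (fun x => d - x) phi); [|apply (agent_dphi A)].
      apply (derivable_pt_lim_minus (fun _ => d) (fun x => x));
        [apply derivable_pt_lim_const|apply derivable_pt_lim_id].
Qed.

Lemma xhat_minimizes lam x : xl <= x <= xu -> Lr f phi d (X lam) lam <= Lr f phi d x lam.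
Proof.
  intros Hx. pose proof (xhat_in lam) as HX.
  (* on the box the [x]-derivative of the Lagrangian has the sign of [v x - lam] *)
  assert (Hsign : forall c, xl <= c <= xu ->
            df c + lam * (-1 + dphi c) = (1 - dphi c) * (v c - lam)).
  { intros c Hc. unfold vfun. pose proof (agent_dphi_lt1 A Hc). field. lra. }
  set (dL := fun c => df c + lam * (-1 + dphi c)).
  destruct (Rtotal_order x (X lam)) as [Hlt|[<-|Hgt]]; [left| lra |left].
  - apply (decreasing_of_deriv_neg dL Hlt (fun c _ => Lr_deriv lam c)). unfold dL.
    intros c Hc. rewrite Hsign by lra. pose proof (agent_dphi_lt1 A (x := c) ltac:(lra)).
    assert (v c < lam).
    { destruct (Rlt_dec (v c) lam) as [|Hge]; auto.
      pose proof (xhat_le (lam := lam) (x := c) ltac:(lra) ltac:(lra)). lra. }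
    nra.
  - apply (increasing_of_deriv_pos dL Hgt (fun c _ => Lr_deriv lam c)). unfold dL.
    intros c Hc. rewrite Hsign by lra. pose proof (agent_dphi_lt1 A (x := c) ltac:(lra)).
    assert (lam < v c).
    { destruct (Rlt_dec lam (v c)) as [|Hge]; auto.
      pose proof (xhat_ge (lam := lam) (x := c) ltac:(lra) ltac:(lra)). lra. }
    nra.
Qed.

Definition local_dual (lam : R) : R := Lr f phi d (X lam) lam.
Definition residual (lam : R) : R := d - X lam + phi (X lam).

Lemma local_dual_supergradient lam mu :
  local_dual mu <= local_dual lam + residual lam * (mu - lam).
Proof.
  unfold local_dual, residual.
  pose proof (xhat_minimizes mu (xhat_in lam)). unfold Lr in *. lra.
Qed.

Lemma residual_cont lam : continuity_pt residual lam.
Proof.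
  unfold residual.
  apply (continuity_pt_plus (fun l => d - X l) (fun l => phi (X l))).
  - apply (continuity_pt_minus (fct_cte d) X); [|apply xhat_cont].
    apply continuity_pt_const. now intros.
  - apply (continuity_pt_comp X phi); [apply xhat_cont|].
    apply derivable_continuous_pt. exists (dphi (X lam)). apply (agent_dphi A).
Qed.

Lemma local_dual_deriv lam : derivable_pt_lim local_dual lam (residual lam).
Proof.
  apply supergradient_derivative; [|apply residual_cont].
  intros y m. apply local_dual_supergradient.
Qed.

Lemma lagrangian_excess_ge_gap lam x1 : xl <= x1 <= xu ->
  2 * midpoint_gap f x1 (X lam) <= Lr f phi d x1 lam - local_dual lam.
Proof.
  intros Hx1. unfold local_dual. set (y := X lam). pose proof (xhat_in lam) as Hy. fold y in Hy.
  unfold midpoint_gap. set (m := (x1 + y) / 2).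
  destruct (Rle_dec 0 lam) as [Hlam|Hlam].
  - (* for [lam >= 0] the Lagrangian is convex and minimal at [y] *)
    pose proof (xhat_minimizes lam (x := m) ltac:(unfold m; lra)) as Hm. fold y in Hm.
    assert (Hphi : phi m <= 1 / 2 * phi x1 + (1 - 1 / 2) * phi y).
    { unfold m. replace ((x1 + y) / 2) with (1 / 2 * x1 + (1 - 1 / 2) * y) by field.
      apply (agent_phi_convex A); lra. }
    assert (lam * phi m <= lam * (1 / 2 * phi x1 + (1 - 1 / 2) * phi y))
      by (apply Rmult_le_compat_l; lra).
    unfold Lr, m in *. lra.
  - (* for [lam < 0] the best response is [xl], where both [f] and
       [x - phi x] are smallest *)
    assert (Hyl : y = xl).
    { pose proof (v_pos (x := xl) ltac:(lra)).
      destruct (xhat_cases lam) as [[_ Hlow]|[[Hhi _]|[Hin Hv]]]; auto.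
      - pose proof (v_pos (x := xu) ltac:(lra)). lra.
      - pose proof (v_pos (x := y) ltac:(lra)). fold y in Hv. lra. }
    rewrite Hyl in *.
    assert (Hf : f xl <= f m).
    { destruct (Rle_lt_or_eq_dec xl m ltac:(unfold m; lra)) as [Hlt|<-]; [|lra].
      left. apply (increasing_of_deriv_pos df Hlt (fun c _ => agent_df A c)).
      intros c Hc. apply (agent_df_pos A). unfold m in *; lra. }
    assert (Hnet : xl - phi xl <= x1 - phi x1).
    { destruct (Rle_lt_or_eq_dec xl x1 (proj1 Hx1)) as [Hlt|<-]; [|lra].
      left. apply (increasing_of_deriv_pos (g := fun z => z - phi z) (fun z => 1 - dphi z) Hlt).
      - intros c _. apply (derivable_pt_lim_minus (fun z => z) phi);
          [apply derivable_pt_lim_id|apply (agent_dphi A)].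
      - intros c Hc. pose proof (agent_dphi_lt1 A (x := c) ltac:(lra)). lra. }
    unfold Lr. assert (lam * (x1 - phi x1 - (xl - phi xl)) <= 0) by nra. lra.
Qed.

End Agent.

(** * The communication graph *)

Lemma young c x kap : 0 < kap -> c * x <= kap * Rsqr x + Rsqr c / (4 * kap).
Proof.
  intros Hk.
  assert (kap * Rsqr x + Rsqr c / (4 * kap) - c * x = kap * Rsqr (x - c / (2 * kap)))
    by (unfold Rsqr; field; lra).
  pose proof (Rle_0_sqr (x - c / (2 * kap))). nra.
Qed.

Section Graph.

Variables (N : nat) (a : nat -> nat -> bool).

Definition disagreement (l : nat -> R) : R :=
  sumN N (fun p => sumN N (fun q => if a p q then Rsqr (l p - l q) else 0)).

Definition consensus (l : nat -> R) (p : nat) : R :=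
  sumN N (fun q => if a q p then l q - l p else 0).

Lemma disagreement_nonneg l : 0 <= disagreement l.
Proof.
  apply sumN_nonneg; intros p _. apply sumN_nonneg; intros q _.
  destruct (a p q); [apply Rle_0_sqr|lra].
Qed.

Lemma disagreement_edge l p q : (p < N)%nat -> (q < N)%nat -> a p q = true ->
  Rsqr (l p - l q) <= disagreement l.
Proof.
  intros Hp Hq Hpq. unfold disagreement.
  assert (Hrow : forall p', 0 <= sumN N (fun q => if a p' q then Rsqr (l p' - l q) else 0)).
  { intros p'. apply sumN_nonneg; intros q' _. destruct (a p' q'); [apply Rle_0_sqr|lra]. }
  eapply Rle_trans; [|apply (sumN_term (fun p => sumN N _) (j := p)); auto].
  eapply Rle_trans;
    [|apply (sumN_term (fun q => if a p q then Rsqr (l p - l q) else 0) (j := q))]; auto.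
  - rewrite Hpq. lra.
  - intros q' _. destruct (a p q'); [apply Rle_0_sqr|lra].
Qed.

Lemma young_bound_nonneg l c kap : 0 < kap ->
  0 <= kap * disagreement l + Rsqr c / (4 * kap).
Proof.
  intros Hk. pose proof (Rmult_le_pos _ _ (Rlt_le _ _ Hk) (disagreement_nonneg l)).
  assert (0 <= Rsqr c / (4 * kap))
    by (apply Rmult_le_pos; [apply Rle_0_sqr|left; apply Rinv_0_lt_compat; lra]).
  lra.
Qed.

Lemma path_bound i j : reach N a i j -> exists n : nat, forall l c kap, 0 < kap ->
  c * (l i - l j) <= INR n * (kap * disagreement l + Rsqr c / (4 * kap)).
Proof.
  induction 1 as [i Hi|i j m Hi Hj Hij _ [n IH]].
  - exists 0%nat. intros. simpl. lra.
  - exists (S n). intros l c kap Hk. rewrite S_INR.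
    specialize (IH l c kap Hk).
    pose proof (young c (l i - l j) Hk).
    pose proof (disagreement_edge l Hi Hj Hij).
    replace (l i - l m) with ((l i - l j) + (l j - l m)) by ring. nra.
Qed.

Lemma connected_bound : connected N a -> (0 < N)%nat -> exists M : nat,
  forall i, (i < N)%nat -> forall l c kap, 0 < kap ->
  c * (l i - l 0%nat) <= INR M * (kap * disagreement l + Rsqr c / (4 * kap)).
Proof.
  intros Hconn HN. apply finite_uniform_nat.
  - intros i m m' Hmm' Hm l c kap Hk. eapply Rle_trans; [exact (Hm l c kap Hk)|].
    apply Rmult_le_compat_r; [apply young_bound_nonneg, Hk|apply le_INR, Hmm'].
  - intros i Hi. apply path_bound, Hconn; auto.
Qed.

Lemma zero_sum_functional_bound (w : nat -> R) : connected N a ->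
  sumN N w = 0 -> exists C, 0 <= C /\ forall k l c, 0 < k ->
  sumN N (fun j => (l j - c) * w j) <= k / 4 * disagreement l + C / k.
Proof.
  intros Hconn Hw. destruct (Nat.eq_dec N 0) as [HN|HN].
  { exists 0. split; [lra|]. intros k l c Hk. unfold disagreement. rewrite HN. simpl. lra. }
  destruct (connected_bound Hconn ltac:(lia)) as [M HM].
  set (Mr := INR (S M)). set (Nr := INR N).
  assert (HMr : INR M <= Mr) by (apply le_INR; lia).
  assert (HM0 : 0 < Mr) by (apply lt_0_INR; lia).
  assert (HN0 : 0 < Nr) by (apply lt_0_INR; lia).
  set (Sw := sumN N (fun j => Rsqr (w j))).
  assert (HSw : 0 <= Sw) by (apply sumN_nonneg; intros; apply Rle_0_sqr).
  exists (Nr * Mr * Mr * Sw). split; [repeat apply Rmult_le_pos; lra|].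
  intros k l c Hk. set (kap := k / (4 * Nr * Mr)).
  assert (Hkap : 0 < kap) by (apply Rdiv_lt_0_compat; [lra|nra]).
  (* recentre at agent 0, which is allowed since the weights sum to zero *)
  replace (sumN N (fun j => (l j - c) * w j)) with (sumN N (fun j => w j * (l j - l 0%nat))).
  2: { replace (sumN N (fun j => w j * (l j - l 0%nat)))
         with (sumN N (fun j => (l j - c) * w j) + (c - l 0%nat) * sumN N w)
         by (rewrite <- sumN_scal, <- sumN_plus; apply sumN_ext; intros; ring).
       rewrite Hw. ring. }
  assert (Hterm : forall j, (j < N)%nat ->
            w j * (l j - l 0%nat) <= Mr * (kap * disagreement l + Rsqr (w j) / (4 * kap))).
  { intros j Hj. specialize (HM j Hj l (w j) kap Hkap).
    pose proof (young_bound_nonneg l (w j) Hkap). nra. }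
  eapply Rle_trans; [apply (sumN_le _ _ Hterm)|].
  rewrite sumN_scal, sumN_plus, sumN_const.
  replace (sumN N (fun j => Rsqr (w j) / (4 * kap))) with (Sw / (4 * kap))
    by (unfold Sw, Rdiv; rewrite Rmult_comm, <- sumN_scal; apply sumN_ext; intros; ring).
  fold Nr. unfold kap. right. field. lra.
Qed.

(** From now on the graph is undirected, which allows summation by parts. *)
Hypothesis Hsym : forall p q, a p q = a q p.

Lemma sum_by_parts x y :
  sumN N (fun p => y p * consensus x p)
  = - / 2 * sumN N (fun p => sumN N (fun q => if a p q then (x p - x q) * (y p - y q) else 0)).
Proof.
  unfold consensus.
  set (S := sumN N (fun p => y p * sumN N (fun q => if a q p then x q - x p else 0))).
  assert (Hsplit :
      sumN N (fun p => sumN N (fun q => if a p q then (x p - x q) * (y p - y q) else 0))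
      = - S + sumN N (fun p => sumN N (fun q => if a p q then (x q - x p) * y q else 0))).
  { unfold S. rewrite <- sumN_opp, <- sumN_plus. apply sumN_ext; intros p _.
    rewrite <- sumN_scal, <- sumN_opp, <- sumN_plus. apply sumN_ext; intros q _.
    rewrite (Hsym q p). destruct (a p q); ring. }
  assert (Hswap : sumN N (fun p => sumN N (fun q => if a p q then (x q - x p) * y q else 0)) = - S).
  { rewrite sumN_swap. unfold S. rewrite <- sumN_opp. apply sumN_ext; intros q _.
    rewrite <- sumN_scal, <- sumN_opp. apply sumN_ext; intros p _.
    rewrite (Hsym p q). destruct (a q p); ring. }
  rewrite Hsplit, Hswap. field.
Qed.

Lemma consensus_pairing c l :
  sumN N (fun p => (c - l p) * consensus l p) = disagreement l / 2.
Proof.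
  rewrite (sum_by_parts l (fun p => c - l p)). unfold disagreement.
  assert (Hflip : sumN N (fun p => sumN N (fun q =>
              if a p q then (l p - l q) * ((c - l p) - (c - l q)) else 0))
            = - sumN N (fun p => sumN N (fun q => if a p q then Rsqr (l p - l q) else 0))).
  { rewrite <- sumN_opp. apply sumN_ext; intros p _.
    rewrite <- sumN_opp. apply sumN_ext; intros q _.
    unfold Rsqr. destruct (a p q); ring. }
  rewrite Hflip. field.
Qed.

Lemma disagreement_deriv (lam : R -> nat -> R) r t :
  (forall i, (i < N)%nat -> derivable_pt_lim (fun s => lam s i) t (r i)) ->
  derivable_pt_lim (fun s => disagreement (lam s)) t
    (-4 * sumN N (fun p => r p * consensus (lam t) p)).
Proof.
  intros Hd. rewrite (sum_by_parts (lam t) r).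
  replace (-4 * (- / 2 * _)) with
    (sumN N (fun p => sumN N (fun q =>
       if a p q then (r p - r q) * (lam t p - lam t q) + (lam t p - lam t q) * (r p - r q)
       else 0))).
  - unfold disagreement, Rsqr.
    apply (derivable_pt_lim_sumN (fun p s => sumN N (fun q =>
             if a p q then (lam s p - lam s q) * (lam s p - lam s q) else 0))).
    intros p Hp.
    apply (derivable_pt_lim_sumN (fun q s =>
             if a p q then (lam s p - lam s q) * (lam s p - lam s q) else 0)).
    intros q Hq. destruct (a p q); [|apply derivable_pt_lim_const].
    apply (derivable_pt_lim_mult (fun s => lam s p - lam s q) (fun s => lam s p - lam s q));
      apply (derivable_pt_lim_minus (fun s => lam s p) (fun s => lam s q)); auto.
  - match goal with
    | |- _ = -4 * (- / 2 * ?T) => replace (-4 * (- / 2 * T)) with (2 * T) by field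
    end.
    rewrite <- sumN_scal. apply sumN_ext; intros p _.
    rewrite <- sumN_scal. apply sumN_ext; intros q _. destruct (a p q); ring.
Qed.

End Graph.

(** * The network: dual ascent with consensus penalty *)

Section Network.

Variables (N : nat) (a : nat -> nat -> bool) (d xl xu : nat -> R)
  (f phi df dphi : nat -> R -> R).
Hypothesis Hagents :
  forall i, (i < N)%nat -> regular_agent (f i) (phi i) (df i) (dphi i) (xl i) (xu i).
Hypothesis Hsym : forall p q, a p q = a q p.

Local Notation g i := (local_dual (f i) (phi i) (df i) (dphi i) (xl i) (xu i) (d i)).
Local Notation u i := (residual (phi i) (df i) (dphi i) (xl i) (xu i) (d i)).
Local Notation rhs k := (dyn_rhs N a d xl xu phi df dphi k).
Local Notation xh i := (xhat (df i) (dphi i) (xl i) (xu i)).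

(** The dynamics is the gradient flow of the penalised dual function
    [W_k(l) = sum_i g_i(l_i) - k/4 Q(l)]. *)
Definition penalized_dual (k : R) (l : nat -> R) : R :=
  sumN N (fun i => g i (l i)) - k / 4 * disagreement N a l.

Lemma rhs_split k l i : rhs k l i = u i (l i) + k * consensus N a l i.
Proof. reflexivity. Qed.

Lemma gm_sum lam : gm N d xl xu f phi df dphi lam = sumN N (fun i => g i lam).
Proof. reflexivity. Qed.

Lemma residuals_balance lstar :
  (forall mu, gm N d xl xu f phi df dphi mu <= gm N d xl xu f phi df dphi lstar) ->
  sumN N (fun i => u i lstar) = 0.
Proof.
  intros Hmax. apply (deriv_zero_at_max (F := fun mu => sumN N (fun i => g i mu)) (x := lstar)).
  - apply (derivable_pt_lim_sumN (fun i mu => g i mu)).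
    intros i Hi. apply local_dual_deriv, Hagents, Hi.
  - intros y. rewrite <- !gm_sum. apply Hmax.
Qed.

Lemma penalized_dual_concave k c l : 0 < k ->
  sumN N (fun i => g i c) - penalized_dual k l <= sumN N (fun i => rhs k l i * (c - l i)).
Proof.
  intros Hk. unfold penalized_dual.
  replace (sumN N (fun i => rhs k l i * (c - l i)))
    with (sumN N (fun i => u i (l i) * (c - l i)) + k * (disagreement N a l / 2)).
  2: { rewrite <- (consensus_pairing N a Hsym c l), <- sumN_scal, <- sumN_plus.
       apply sumN_ext; intros. rewrite rhs_split. ring. }
  assert (sumN N (fun i => g i c) - sumN N (fun i => g i (l i))
            <= sumN N (fun i => u i (l i) * (c - l i))).
  { rewrite <- sumN_minus. apply sumN_le. intros i Hi.
    pose proof (local_dual_supergradient (d i) (Hagents Hi) (l i) c). lra. }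
  pose proof (disagreement_nonneg N a l). nra.
Qed.

Lemma penalized_dual_deriv k (lam : R -> nat -> R) t :
  (forall i, (i < N)%nat -> derivable_pt_lim (fun s => lam s i) t (rhs k (lam t) i)) ->
  derivable_pt_lim (fun s => penalized_dual k (lam s)) t
    (sumN N (fun i => Rsqr (rhs k (lam t) i))).
Proof.
  intros Hd. unfold penalized_dual.
  replace (sumN N (fun i => Rsqr (rhs k (lam t) i))) with
    (sumN N (fun i => u i (lam t i) * rhs k (lam t) i)
     - k / 4 * (-4 * sumN N (fun p => rhs k (lam t) p * consensus N a (lam t) p))).
  - apply (derivable_pt_lim_minus (fun s => sumN N (fun i => g i (lam s i)))
                                  (fun s => k / 4 * disagreement N a (lam s))).
    + apply (derivable_pt_lim_sumN (fun i s => g i (lam s i))). intros i Hi.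
      apply (derivable_pt_lim_comp (fun s => lam s i) (g i)); [apply Hd, Hi|].
      apply local_dual_deriv, Hagents, Hi.
    + apply (derivable_pt_lim_scal (fun s => disagreement N a (lam s)) (k / 4)).
      apply (disagreement_deriv a Hsym), Hd.
  - rewrite <- sumN_scal, <- sumN_scal, <- sumN_minus. apply sumN_ext; intros i _.
    unfold Rsqr. rewrite rhs_split. field.
Qed.

Definition half_sq_dist (c : R) (l : nat -> R) : R := / 2 * sumN N (fun i => Rsqr (l i - c)).

Lemma half_sq_dist_nonneg c l : 0 <= half_sq_dist c l.
Proof.
  unfold half_sq_dist. apply Rmult_le_pos; [lra|].
  apply sumN_nonneg; intros; apply Rle_0_sqr.
Qed.

Lemma half_sq_dist_deriv c (lam : R -> nat -> R) r t :
  (forall i, (i < N)%nat -> derivable_pt_lim (fun s => lam s i) t (r i)) ->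
  derivable_pt_lim (fun s => half_sq_dist c (lam s)) t (sumN N (fun i => (lam t i - c) * r i)).
Proof.
  intros Hd. unfold half_sq_dist, Rsqr.
  replace (sumN N (fun i => (lam t i - c) * r i))
    with (/ 2 * sumN N (fun i => (r i - 0) * (lam t i - c) + (lam t i - c) * (r i - 0)))
    by (rewrite <- sumN_scal; apply sumN_ext; intros; field).
  apply (derivable_pt_lim_scal (fun s => sumN N (fun i => (lam s i - c) * (lam s i - c)))).
  apply (derivable_pt_lim_sumN (fun i s => (lam s i - c) * (lam s i - c))). intros i Hi.
  apply (derivable_pt_lim_mult (fun s => lam s i - c) (fun s => lam s i - c));
    (apply (derivable_pt_lim_minus (fun s => lam s i) (fun _ => c));
     [apply Hd, Hi|apply derivable_pt_lim_const]).
Qed.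

Section RightContinuity.

Variable lam : R -> nat -> R.
Hypothesis Hlam0 : forall i, (i < N)%nat -> right_lim (fun s => lam s i) (lam 0 i).

Lemma half_sq_dist_right_lim c :
  right_lim (fun s => half_sq_dist c (lam s)) (half_sq_dist c (lam 0)).
Proof.
  unfold half_sq_dist, Rsqr. apply (limit_mul (fun _ => / 2)); [apply right_lim_const|].
  apply (right_lim_sumN (fun i s => (lam s i - c) * (lam s i - c))). intros i Hi.
  apply limit_mul; (apply (limit_minus (fun s => lam s i) (fun _ => c));
    [apply (Hlam0 Hi)|apply right_lim_const]).
Qed.

Lemma penalized_dual_right_lim k :
  right_lim (fun s => penalized_dual k (lam s)) (penalized_dual k (lam 0)).
Proof.
  unfold penalized_dual. apply limit_minus.
  - apply (right_lim_sumN (fun i s => g i (lam s i))). intros i Hi.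
    apply (right_lim_comp (Hlam0 Hi)).
    apply derivable_continuous_pt. exists (u i (lam 0 i)).
    apply local_dual_deriv, Hagents, Hi.
  - apply (limit_mul (fun _ => k / 4)); [apply right_lim_const|].
    unfold disagreement, Rsqr.
    apply (right_lim_sumN (fun p s => sumN N (fun q =>
             if a p q then (lam s p - lam s q) * (lam s p - lam s q) else 0))).
    intros p Hp.
    apply (right_lim_sumN (fun q s =>
             if a p q then (lam s p - lam s q) * (lam s p - lam s q) else 0)).
    intros q Hq. destruct (a p q); [|apply right_lim_const].
    apply limit_mul; (apply (limit_minus (fun s => lam s p) (fun s => lam s q));
      [apply (Hlam0 Hp)|apply (Hlam0 Hq)]).
Qed.

End RightContinuity.

Lemma solution_right_lim k lam : is_solution N a d xl xu phi df dphi k lam ->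
  forall i, (i < N)%nat -> right_lim (fun s => lam s i) (lam 0 i).
Proof.
  intros [_ Hcont] i Hi e He. destruct (Hcont i Hi e He) as [dl [Hdl Hq]].
  exists dl. split; auto. intros s [Hs Hsd]. simpl in *. unfold R_dist in *.
  rewrite Rminus_0_r in Hsd. apply Hq. apply Rabs_def2 in Hsd. lra.
Qed.

Definition lyapunov k c (lam : R -> nat -> R) (s : R) : R :=
  half_sq_dist c (lam s) + s * (sumN N (fun i => g i c) - penalized_dual k (lam s)).

Definition lyapunov_rate k c (lam : R -> nat -> R) (s : R) : R :=
  sumN N (fun i => (lam s i - c) * rhs k (lam s) i)
  + (sumN N (fun i => g i c) - penalized_dual k (lam s))
  - s * sumN N (fun i => Rsqr (rhs k (lam s) i)).

Lemma lyapunov_deriv k c lam s :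
  (forall i, (i < N)%nat -> derivable_pt_lim (fun s => lam s i) s (rhs k (lam s) i)) ->
  derivable_pt_lim (lyapunov k c lam) s (lyapunov_rate k c lam s).
Proof.
  intros Hd. unfold lyapunov, lyapunov_rate. set (gc := sumN N (fun i => g i c)).
  replace (_ + _ - _) with (sumN N (fun i => (lam s i - c) * rhs k (lam s) i)
    + (1 * (gc - penalized_dual k (lam s))
       + s * (0 - sumN N (fun i => Rsqr (rhs k (lam s) i))))) by ring.
  apply (derivable_pt_lim_plus (fun s => half_sq_dist c (lam s))
           (fun s => s * (gc - penalized_dual k (lam s)))).
  - apply half_sq_dist_deriv, Hd.
  - apply (derivable_pt_lim_mult (fun s => s) (fun s => gc - penalized_dual k (lam s)));
      [apply derivable_pt_lim_id|].
    apply (derivable_pt_lim_minus (fun _ => gc)); [apply derivable_pt_lim_const|].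
    apply penalized_dual_deriv, Hd.
Qed.

(** [E' <= 0]: the concavity defect of [W_k] is paid by the distance term. *)
Lemma lyapunov_rate_nonpos k c lam s : 0 < k -> 0 <= s -> lyapunov_rate k c lam s <= 0.
Proof.
  intros Hk Hs. unfold lyapunov_rate.
  pose proof (penalized_dual_concave c (lam s) Hk).
  assert (sumN N (fun i => (lam s i - c) * rhs k (lam s) i)
          = - sumN N (fun i => rhs k (lam s) i * (c - lam s i)))
    by (rewrite <- sumN_opp; apply sumN_ext; intros; ring).
  assert (0 <= s * sumN N (fun i => Rsqr (rhs k (lam s) i)))
    by (apply Rmult_le_pos; [lra|apply sumN_nonneg; intros; apply Rle_0_sqr]).
  lra.
Qed.

Lemma lyapunov_right_lim k c lam :
  (forall i, (i < N)%nat -> right_lim (fun s => lam s i) (lam 0 i)) ->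
  right_lim (lyapunov k c lam) (half_sq_dist c (lam 0)).
Proof.
  intros Hlam0. unfold lyapunov. set (gc := sumN N (fun i => g i c)).
  replace (half_sq_dist c (lam 0))
    with (half_sq_dist c (lam 0) + 0 * (gc - penalized_dual k (lam 0))) by ring.
  apply limit_plus; [apply half_sq_dist_right_lim, Hlam0|].
  apply (limit_mul (fun s => s)); [apply lim_x|].
  apply (limit_minus (fun _ => gc)); [apply right_lim_const|].
  apply penalized_dual_right_lim, Hlam0.
Qed.

Lemma dual_gap_rate k c lam t : 0 < k -> is_solution N a d xl xu phi df dphi k lam -> 0 < t ->
  t * (sumN N (fun i => g i c) - penalized_dual k (lam t)) <= half_sq_dist c (lam 0).
Proof.
  intros Hk Hsol Ht.
  pose proof (le_right_lim_of_deriv_nonpos (lyapunov_rate k c lam) Ht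
    (fun s Hs => lyapunov_deriv c lam (fun i Hi => proj1 Hsol i s Hi Hs))
    (fun s Hs => lyapunov_rate_nonpos c lam Hk (Rlt_le _ _ Hs))
    (lyapunov_right_lim k c lam (solution_right_lim Hsol))) as HE.
  unfold lyapunov in HE. pose proof (half_sq_dist_nonneg c (lam t)). lra.
Qed.

Definition primal_excess (c : R) (l : nat -> R) (i : nat) : R :=
  Lr (f i) (phi i) (d i) (xh i c) (l i) - g i (l i).

Lemma primal_excess_nonneg c l i : (i < N)%nat -> 0 <= primal_excess c l i.
Proof.
  intros Hi. unfold primal_excess, local_dual.
  pose proof (xhat_minimizes (d i) (Hagents Hi) (l i) (xhat_in (Hagents Hi) c)). lra.
Qed.

Lemma dual_gap_split k c l :
  sumN N (fun i => g i c) - penalized_dual k l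
  = sumN N (primal_excess c l) - sumN N (fun i => (l i - c) * u i c)
    + k / 4 * disagreement N a l.
Proof.
  unfold penalized_dual. rewrite <- !sumN_minus.
  replace (sumN N (fun i => g i c)) with
    (sumN N (fun i => primal_excess c l i - (l i - c) * u i c + g i (l i))).
  - rewrite !sumN_plus, !sumN_minus. ring.
  - apply sumN_ext; intros. unfold primal_excess, local_dual, residual, Lr. ring.
Qed.

Lemma primal_excess_bound c : connected N a -> sumN N (fun i => u i c) = 0 ->
  exists C, 0 <= C /\ forall k l, 0 < k ->
  sumN N (primal_excess c l) <= sumN N (fun i => g i c) - penalized_dual k l + C / k.
Proof.
  intros Hconn Hbal.
  destruct (zero_sum_functional_bound (fun i => u i c) Hconn Hbal) as [C [HC HCbound]].
  exists C. split; auto. intros k l Hk. rewrite dual_gap_split.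
  pose proof (HCbound k l c Hk). lra.
Qed.

Lemma uniform_separation c eps : 0 < eps -> exists c0, 0 < c0 /\
  forall i y, (i < N)%nat -> xl i <= y <= xu i -> eps < Rabs (y - xh i c) ->
  c0 <= midpoint_gap (f i) (xh i c) y.
Proof.
  intros Heps.
  destruct (finite_uniform_pos (n := N) (fun i c0 => forall y, xl i <= y <= xu i ->
              eps < Rabs (y - xh i c) -> c0 <= midpoint_gap (f i) (xh i c) y))
    as [c0 [Hc0 Hsep]].
  - intros i c1 c2 Hc12 Hc1 y Hy Hey. specialize (Hc1 y Hy Hey). lra.
  - intros i Hi. pose proof (Hagents Hi) as A.
    apply (midpoint_gap_lower_bound (df i) (agent_f_convex A) (agent_df A)).
    + apply (xhat_in A).
    + exact Heps.
  - exists c0. split; [exact Hc0|]. intros i y Hi. exact (Hsep i Hi y).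
Qed.

Lemma allocation_close c eps c0 l i :
  (forall i y, (i < N)%nat -> xl i <= y <= xu i -> eps < Rabs (y - xh i c) ->
     c0 <= midpoint_gap (f i) (xh i c) y) ->
  sumN N (primal_excess c l) < 2 * c0 -> (i < N)%nat ->
  Rabs (xh i (l i) - xh i c) <= eps.
Proof.
  intros Hsep Hsmall Hi. pose proof (Hagents Hi) as A.
  destruct (Rle_dec (Rabs (xh i (l i) - xh i c)) eps) as [|Hfar]; auto. exfalso.
  pose proof (Hsep i (xh i (l i)) Hi (xhat_in A (l i)) ltac:(lra)) as Hgap.
  pose proof (lagrangian_excess_ge_gap (d i) A (l i) (xhat_in A c)) as Hexc.
  pose proof (sumN_term (primal_excess c l) (fun j Hj => primal_excess_nonneg c l Hj) Hi).
  unfold primal_excess in *. lra.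
Qed.

Lemma lt_of_rate V t G eta : 0 < eta -> 0 <= V -> (V + 1) / eta <= t -> t * G <= V -> G < eta.
Proof.
  intros Heta HV Ht HtG. destruct (Rle_dec G 0) as [|HG]; [lra|].
  assert ((V + 1) / eta * G <= t * G) by (apply Rmult_le_compat_r; lra).
  assert ((V + 1) / eta * G * eta = (V + 1) * G) by (field; lra).
  assert ((V + 1) * G <= V * eta) by nra. nra.
Qed.

Hypothesis Hconn : connected N a.
Variable lstar : R.
Hypothesis Hbal : sumN N (fun i => u i lstar) = 0.

(** Choose [k > C / c0] to make the consensus error below [c0], and wait
    until the dual gap is below [c0]: then the total primal excess is below
    [2 c0], which pins every allocation within [eps] of [xhat_i(lstar)]. *)
Theorem network_convergence eps : 0 < eps ->
  exists kbar, 0 < kbar /\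
  exists T : (nat -> R) -> R -> R,
  forall k, kbar < k ->
  forall lam : R -> nat -> R, is_solution N a d xl xu phi df dphi k lam ->
  forall i t, (i < N)%nat -> T (lam 0) k <= t -> Rabs (xh i (lam t i) - xh i lstar) <= eps.
Proof.
  intros Heps.
  destruct (primal_excess_bound lstar Hconn Hbal) as [C [HC Hexcess]].
  destruct (uniform_separation lstar Heps) as [c0 [Hc0 Hsep]].
  assert (HCc0 : 0 <= C / c0) by (apply Rmult_le_pos; [lra|left; apply Rinv_0_lt_compat; lra]).
  exists (C / c0 + 1). split; [lra|].
  exists (fun l0 _ => (half_sq_dist lstar l0 + 1) / c0).
  intros k Hk lam Hsol i t Hi Ht.
  pose proof (half_sq_dist_nonneg lstar (lam 0)) as HV0.
  assert (Hk0 : 0 < k) by lra.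
  assert (HCk : C / k < c0).
  { apply Rmult_lt_reg_r with k; [lra|]. replace (C / k * k) with C by (field; lra).
    replace C with (C / c0 * c0) at 1 by (field; lra). nra. }
  assert (Ht0 : 0 < t).
  { assert (0 < (half_sq_dist lstar (lam 0) + 1) / c0) by (apply Rdiv_lt_0_compat; lra). lra. }
  pose proof (lt_of_rate Hc0 HV0 Ht (dual_gap_rate lstar Hk0 Hsol Ht0)) as Hgap.
  apply (allocation_close lstar (c0 := c0) (lam t) Hsep); auto.
  pose proof (Hexcess k (lam t) Hk0). lra.
Qed.

End Network.

Unset Implicit Arguments.

Theorem theorem3
  (N : nat) (d xl xu : nat -> R) (f phi df dphi : nat -> R -> R)
  (a : nat -> nat -> bool)
  (Hint : forall i, (i < N)%nat -> xl i <= xu i)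
  (Hdf : forall i x, (i < N)%nat -> derivable_pt_lim (f i) x (df i x))
  (Hdfc : forall i x, (i < N)%nat -> continuity_pt (df i) x)
  (Hdphi : forall i x, (i < N)%nat -> derivable_pt_lim (phi i) x (dphi i x))
  (Hdphic : forall i x, (i < N)%nat -> continuity_pt (dphi i) x)
  (Hfconv : forall i, (i < N)%nat -> strictly_convex_on (f i) (xl i) (xu i))
  (Hphiconv : forall i, (i < N)%nat -> convex_on (phi i) (xl i) (xu i))
  (Hdphi1 : forall i x, (i < N)%nat -> xl i <= x <= xu i -> dphi i x < 1)
  (Hdfpos : forall i x, (i < N)%nat -> xl i <= x <= xu i -> 0 < df i x)
  (Hsym : forall i j, a i j = a j i)
  (Hconn : connected N a)
  (Hfeas : sumN N (fun i => xl i - phi i (xl i)) <= sumN N d /\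
           sumN N d <= sumN N (fun i => xu i - phi i (xu i)))
  (lstar : R)
  (Hmax : forall mu, gm N d xl xu f phi df dphi mu
                     <= gm N d xl xu f phi df dphi lstar) :
  forall eps, 0 < eps ->
  exists kbar, 0 < kbar /\
  exists T : (nat -> R) -> R -> R,
  forall k, kbar < k ->
  forall lam : R -> nat -> R,
    is_solution N a d xl xu phi df dphi k lam ->
    forall i t, (i < N)%nat -> T (lam 0) k <= t ->
      Rabs (xhat (df i) (dphi i) (xl i) (xu i) (lam t i)
            - xhat (df i) (dphi i) (xl i) (xu i) lstar) <= eps.
Proof.
  assert (Hagents : forall i, (i < N)%nat ->
            regular_agent (f i) (phi i) (df i) (dphi i) (xl i) (xu i))
    by (intros i Hi; constructor; auto).
  exact (network_convergence d xl xu f phi df dphi Hagents Hsym Hconn lstar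
           (residuals_balance d xl xu f phi df dphi Hagents lstar Hmax)).
Qed.
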